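(* Let $n\ge2$, $v_T=[[1,\dots,n],n+1,\dots,2n-1]\in V_{n,3}$, and for $i\in[n]$ let $v_{R_i}=[[i,n+1,\dots,2n-1],1,\dots,\widehat{i},\dots,n]$. Then \[\eta(v_T)=-\Big(\varphi(v_T)+\sum_{i=1}^n(-1)^{i-1}\varphi(v_{R_i})\Big).\]
   Context: All vector spaces are over $\mathbb C$. $V_{n,3}$ is the $\mathbb C$-span of left-comb brackets $[[x_1,\dots,x_n],y_1,\dots,y_{n-1}]$ with $\{x_i\}\cup\{y_j\}=[2n-1]$, modulo antisymmetry in the $x$'s and separately in the $y$'s; it is identified with $\tilde M^{2^{n-1}1}$ (the span of column tabloids of shape $2^{n-1}1$ modulo antisymmetry within columns) by sending such a bracket to the column tabloid with first column the $x$'s and second column the $y$'s. The map $\varphi:V_{n,3}\to V_{n,3}$ is $\varphi([[x_1,\dots,x_n],y_1,\dots,y_{n-1}])=[[x_1,\dots,x_n],y_1,\dots,y_{n-1}]-\sum_{i=1}^n(-1)^{n-i}[[y_1,\dots,y_{n-1},x_i],x_1,\dots,\widehat{x_i},\dots,x_n]$. The map $\eta$ is the linear map $\eta([t])=(n-1)[t]-\sum_{j=1}^{n-1}\pi^j_{1,1}([t])$, where $\pi^{j}_{1,1}([t])$ is the sum, over all entries $x$ of the first column of $t$, of the column tabloids $[t']$ with $t'$ obtained from $t$ by swapping $x$ with the $j$-th entry of the second column. *)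

From HB Require Import structures.
From mathcomp Require Import all_boot all_order all_algebra all_field.
Set Implicit Arguments. Unset Strict Implicit. Unset Printing Implicit Defensive.
Import GRing.Theory Num.Theory.
Local Open Scope ring_scope.

(* Model of V_{n,3} = ~M^{2^{n-1}1}: column tabloids with first column x
   (n entries) and second column y (n-1 entries), entries in [2n-1], modulo
   antisymmetry within each column.  The space has a basis given by the
   tabloids with increasing columns, which is indexed by the set of entries of
   the first column.  We embed it in the free vector space over algC on
   subsets of 'I_(2*n) (only n-subsets of {1..2n-1} are used). *)

Notation V n := ({ffun {set 'I_(2 * n)} -> algC^o}).

Definition evec (n : nat) (S : {set 'I_(2 * n)}) : V n :=
  [ffun T => (T == S)%:R].

Definition ninv (s : seq nat) : nat :=
  \sum_(i < size s) \sum_(j < size s | (i < j)%N) (nth 0%N s j < nth 0%N s i)%N.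
Definition sgnseq (s : seq nat) : algC := (-1) ^+ ninv s.

(* the column tabloid [t] whose first column is x and second column is y,
   i.e. the bracket [[x_1..x_n], y_1..y_{n-1}] *)
Definition colt (n : nat) (x y : seq nat) : V n :=
  (sgnseq x * sgnseq y) *: evec [set i : 'I_(2 * n) | val i \in x].

Definition dropi (i : nat) (x : seq nat) : seq nat := take i x ++ drop i.+1 x.

(* phi([[x_1..x_n], y_1..y_{n-1}]) =
     [[x],y] - sum_{i=1}^n (-1)^(n-i) [[y_1..y_{n-1}, x_i], x_1..^x_i..x_n]
   (0-based index i corresponds to paper's i+1, sign (-1)^(n-1-i)) *)
Definition phiV (n : nat) (x y : seq nat) : V n :=
  colt n x y -
  \sum_(i < size x) (-1) ^+ (size x - i.+1) *: colt n (rcons y (nth 0%N x i)) (dropi i x).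

(* pi^j_{1,1}([t]) : sum over entries of the first column, swapped with the
   j-th entry of the second column (0-based j) *)
Definition pij (n : nat) (j : nat) (x y : seq nat) : V n :=
  \sum_(i < size x) colt n (set_nth 0%N x i (nth 0%N y j)) (set_nth 0%N y j (nth 0%N x i)).

Definition etaV (n : nat) (x y : seq nat) : V n :=
  ((size x).-1)%:R *: colt n x y - \sum_(j < size y) pij n j x y.

Definition vT_x (n : nat) : seq nat := iota 1 n.
Definition vT_y (n : nat) : seq nat := iota n.+1 n.-1.
Definition vR_x (n i : nat) : seq nat := i :: iota n.+1 n.-1.
Definition vR_y (n i : nat) : seq nat := rem i (iota 1 n).

(* Every column tabloid equals, up to the sign of the permutations sorting its
   two columns, the basis vector of its first column.  The tabloids occurring
   in eta(v_T), phi(v_T) and phi(v_{R_i}) have as first column either [n], or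
   {i, n+1, ..., 2n-1}, or [n] with i exchanged for some n+j; all their columns
   are increasing except for one displaced entry, so each sign is (-1) to an
   explicit inversion count.  Comparing coefficients: the {i, n+1, ..., 2n-1}
   terms of phi(v_T) and phi(v_{R_i}) cancel, [n] collects 1 - n, and the
   exchanged terms of the phi(v_{R_i}) are exactly those of the pi^j_{1,1}. *)

From HB Require Import structures.
From mathcomp Require Import all_boot all_order all_algebra all_field.
From mathcomp Require Import zify.
Import GRing.Theory Num.Theory.

Lemma count_size_in (T : eqType) (p : pred T) (s : seq T) :
  {in s, forall y, p y} -> count p s = size s.
Proof. by move=> /allP; rewrite all_count => /eqP. Qed.

Lemma count0_in (T : eqType) (p : pred T) (s : seq T) :
  {in s, forall y, ~~ p y} -> count p s = 0%N.
Proof. by move=> h; apply/eqP; rewrite -leqn0 leqNgt -has_count; apply/hasPn. Qed.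

Lemma sum_nth_count (p : pred nat) (s : seq nat) :
  (\sum_(j < size s) p (nth 0%N s j))%N = count p s.
Proof.
elim: s => [|x s IH]; first by rewrite big_ord0.
by rewrite /= big_ord_recl /= IH.
Qed.

Lemma ninv_nil : ninv [::] = 0%N.
Proof. by rewrite /ninv big_ord0. Qed.

Lemma ninv_cons x s : ninv (x :: s) = (count (fun y => y < x) s + ninv s)%N.
Proof.
rewrite /ninv /= big_ord_recl /=; congr (_ + _)%N.
  rewrite big_mkcond /= big_ord_recl /= -sum_nth_count.
  by apply: eq_bigr => j _.
apply: eq_bigr => i _.
rewrite big_mkcond /= big_ord_recl /= add0n [RHS]big_mkcond /=.
by apply: eq_bigr => j _.
Qed.

Lemma ninv_cat s t : ninv (s ++ t) =
  (ninv s + ninv t + \sum_(x <- s) count (fun y => y < x) t)%N.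
Proof.
elim: s => [|x s IH]; first by rewrite ninv_nil big_nil add0n addn0.
rewrite cat_cons !ninv_cons IH count_cat big_cons; lia.
Qed.

Lemma ninv_sorted s : sorted ltn s -> ninv s = 0%N.
Proof.
elim: s => [|x s IH] /=; first by rewrite ninv_nil.
move=> xs; rewrite ninv_cons IH ?(path_sorted xs) // addn0.
apply: count0_in => y ys; rewrite -leqNgt ltnW //.
exact: (allP (order_path_min ltn_trans xs)).
Qed.

Lemma ninv_cons_sorted x s :
  sorted ltn s -> ninv (x :: s) = count (fun y => y < x) s.
Proof. by move=> ss; rewrite ninv_cons ninv_sorted ?addn0. Qed.

Lemma ninv_rcons_sorted s x :
  sorted ltn s -> ninv (rcons s x) = count (fun y => x < y) s.
Proof.
move=> ss; rewrite -cats1 ninv_cat ninv_sorted // ninv_cons ninv_nil /= !addn0 add0n.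
by elim: s {ss} => [|y s IH]; rewrite ?big_nil // big_cons IH /= addn0.
Qed.

Lemma sorted_dropi i s : sorted ltn s -> sorted ltn (dropi i s).
Proof.
move=> ss; apply: (subseq_sorted ltn_trans _ ss); rewrite -{2}(cat_take_drop i s).
by apply: cat_subseq => //; rewrite -add1n -drop_drop drop_subseq.
Qed.

Lemma sorted_rem x s : sorted ltn s -> sorted ltn (rem x s).
Proof. exact/subseq_sorted/rem_subseq/ltn_trans. Qed.

Lemma sgnseq_sorted s : sorted ltn s -> sgnseq s = 1%R.
Proof. by move=> ss; rewrite /sgnseq ninv_sorted. Qed.

Lemma set_nth_iota a m i b : (i < m)%N ->
  set_nth 0%N (iota a m) i b = iota a i ++ b :: iota (a + i.+1) (m - i.+1).
Proof.
by move=> im; rewrite set_nthE size_iota im take_iota drop_iota (minn_idPl (ltnW im)).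
Qed.

Lemma ninv_set_nth_iota_gt a m i b : (i < m)%N -> (a + m <= b)%N ->
  ninv (set_nth 0%N (iota a m) i b) = (m - i.+1)%N.
Proof.
move=> im hb; rewrite set_nth_iota // ninv_cat ninv_sorted ?iota_ltn_sorted //.
rewrite ninv_cons_sorted ?iota_ltn_sorted // count_size_in ?size_iota; last first.
  by move=> y; rewrite mem_iota; lia.
rewrite big1_seq ?addn0 // => x /andP[_]; rewrite mem_iota => hx /=.
by rewrite count0_in; [lia | move=> y; rewrite mem_iota; lia].
Qed.

Lemma ninv_set_nth_iota_lt a m j b : (j < m)%N -> (b < a)%N ->
  ninv (set_nth 0%N (iota a m) j b) = j.
Proof.
move=> jm hb; rewrite set_nth_iota // ninv_cat ninv_sorted ?iota_ltn_sorted //.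
rewrite ninv_cons_sorted ?iota_ltn_sorted // count0_in; last first.
  by move=> y; rewrite mem_iota; lia.
rewrite (eq_big_seq (fun _ => 1%N)) ?sum1_size ?size_iota // => x.
rewrite mem_iota => hx /=; rewrite count0_in; first by have -> : (b < x)%N by lia.
by move=> y; rewrite mem_iota; lia.
Qed.

Local Open Scope ring_scope.

Lemma sign_mod2 (R : pzRingType) (a b : nat) :
  a = b %[mod 2] -> (-1) ^+ a = (-1) ^+ b :> R.
Proof. by move=> e; rewrite -signr_odd -[RHS]signr_odd -!modn2 e. Qed.

Section Basis.
Variable n : nat.

Definition setOf (s : seq nat) : {set 'I_(2 * n)} := [set k : 'I_(2 * n) | val k \in s].

Lemma coltE x y : colt n x y = (sgnseq x * sgnseq y) *: evec (setOf x).
Proof. by []. Qed.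

Lemma setOf_perm {s t : seq nat} : perm_eq s t -> setOf s = setOf t.
Proof. by move=> /perm_mem st; apply/setP => k; rewrite !inE st. Qed.

Definition eT := evec (setOf (iota 1 n)).
Definition eR (i : nat) := evec (setOf (rcons (iota n.+1 n.-1) i.+1)).
Definition eswap (i j : nat) := evec (setOf (set_nth 0%N (iota 1 n) i (n.+1 + j))).

Definition eR_sum := \sum_(i < n) (-1) ^+ i *: eR i.
Definition eswap_sum := \sum_(i < n) \sum_(j < n.-1) (-1) ^+ (n - i.+1 + j) *: eswap i j.

Lemma etaV_vT : etaV n (vT_x n) (vT_y n) = n.-1%:R *: eT - eswap_sum.
Proof.
rewrite /etaV /vT_x /vT_y coltE !sgnseq_sorted ?iota_ltn_sorted // mulr1 scale1r.
rewrite !size_iota; congr (_ - _); rewrite exchange_big /= size_iota.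
apply: eq_bigr => i _; apply: eq_bigr => j _; have hi := ltn_ord i; have hj := ltn_ord j.
rewrite coltE /sgnseq !nth_iota //.
by rewrite ninv_set_nth_iota_gt ?ninv_set_nth_iota_lt -?exprD //; lia.
Qed.

Lemma phiV_vT : phiV n (vT_x n) (vT_y n) = eT - eR_sum.
Proof.
rewrite /phiV /vT_x /vT_y coltE !sgnseq_sorted ?iota_ltn_sorted // mulr1 scale1r.
rewrite size_iota; congr (_ - _); apply: eq_bigr => i _; have hi := ltn_ord i.
rewrite coltE [sgnseq (dropi _ _)]sgnseq_sorted ?sorted_dropi ?iota_ltn_sorted //.
rewrite nth_iota // add1n /sgnseq ninv_rcons_sorted ?iota_ltn_sorted //.
rewrite count_size_in; last first.
  by move=> y; rewrite mem_iota; lia.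
rewrite size_iota mulr1 scalerA -exprD; congr (_ *: _).
by apply: sign_mod2; lia.
Qed.

Lemma count_gt_rem_iota i : (i < n)%N ->
  count (fun y => i.+1 < y)%N (rem i.+1 (iota 1 n)) = (n - i.+1)%N.
Proof.
move=> hi; have /permP/(_ (fun y => i.+1 < y)%N) :
    perm_eq (iota 1 n) (i.+1 :: rem i.+1 (iota 1 n)).
  by apply: perm_to_rem; rewrite mem_iota; lia.
rewrite /= ltnn add0n => <-.
have -> : iota 1 n = iota 1 i.+1 ++ iota i.+2 (n - i.+1) by rewrite -iotaD subnKC.
rewrite count_cat count0_in; last first.
  by move=> y; rewrite mem_iota; lia.
by rewrite count_size_in ?size_iota //; move=> y; rewrite mem_iota; lia.
Qed.

Lemma setOf_rcons_rem i b : (i < n)%N ->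
  setOf (rcons (rem i.+1 (iota 1 n)) b) = setOf (set_nth 0%N (iota 1 n) i b).
Proof.
move=> hi; apply/setP => k; rewrite !inE mem_rcons in_cons mem_rem_uniq ?iota_uniq //.
by rewrite inE set_nth_iota // mem_cat in_cons !mem_iota; lia.
Qed.

Lemma phiV_vR i : (i < n)%N -> phiV n (vR_x n i.+1) (vR_y n i.+1) =
  eR i - (-1) ^+ i *: eT - \sum_(j < n.-1) (-1) ^+ (n - j.+2) *: eswap i j.
Proof.
move=> hi; have sorted_rem_iota := @sorted_rem i.+1 _ (iota_ltn_sorted 1 n).
have sorted_vR_x : sorted ltn (i.+1 :: iota n.+1 n.-1).
  rewrite /= (path_sortedE ltn_trans) iota_ltn_sorted andbT.
  by apply/allP => y; rewrite mem_iota; lia.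
rewrite /phiV /vR_x /vR_y coltE !sgnseq_sorted // mulr1 scale1r.
have -> : setOf (i.+1 :: iota n.+1 n.-1) = setOf (rcons (iota n.+1 n.-1) i.+1).
  by apply: setOf_perm; rewrite perm_sym perm_rcons.
rewrite /= size_iota big_ord_recl opprD addrA; congr (_ - _ - _).
  rewrite coltE /= /dropi /= drop0 [sgnseq (iota _ _)]sgnseq_sorted ?iota_ltn_sorted //.
  rewrite /sgnseq ninv_rcons_sorted // count_gt_rem_iota // mulr1 scalerA -exprD.
  have -> : setOf (rcons (rem i.+1 (iota 1 n)) i.+1) = setOf (iota 1 n).
    by apply: setOf_perm; rewrite perm_rcons perm_sym perm_to_rem // mem_iota; lia.
  by congr (_ *: _); apply: sign_mod2; lia.
apply: eq_bigr => j _; have hj := ltn_ord j.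
rewrite /= /bump /= add1n nth_iota //.
rewrite coltE [sgnseq (dropi _ _)]sgnseq_sorted ?sorted_dropi //.
rewrite /sgnseq ninv_rcons_sorted // count0_in; last first.
  by move=> y /mem_rem; rewrite mem_iota; lia.
rewrite mulr1 scale1r setOf_rcons_rem //.
by congr (_ ^+ _ *: _); lia.
Qed.

Lemma sum_phiV_vR :
  \sum_(1 <= i < n.+1) (-1) ^+ (i - 1) *: phiV n (vR_x n i) (vR_y n i) =
  eR_sum - n%:R *: eT + eswap_sum.
Proof.
have sum_eT : n%:R *: eT = \sum_(i < n) eT by rewrite sumr_const card_ord scaler_nat.
rewrite big_add1 /= big_mkord sum_eT /eR_sum /eswap_sum -sumrB -big_split /=.
apply: eq_bigr => i _; have hi := ltn_ord i.
rewrite subn1 /= phiV_vR // !scalerBr scalerA -exprD.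
rewrite (@sign_mod2 _ (i + i) 0) ?expr0 ?scale1r; last lia.
rewrite scaler_sumr -sumrN; congr (_ + _); apply: eq_bigr => j _.
rewrite scalerA -scaleNr -mulN1r -!exprD -exprS; congr (_ *: _).
by apply: sign_mod2; have := ltn_ord j; lia.
Qed.

End Basis.

Theorem mainTheorem7 (n : nat) (hn : (2 <= n)%N) :
  etaV n (vT_x n) (vT_y n) =
  - (phiV n (vT_x n) (vT_y n) +
     \sum_(1 <= i < n.+1) (-1) ^+ (i - 1) *: phiV n (vR_x n i) (vR_y n i)).
Proof.
rewrite etaV_vT phiV_vT sum_phiV_vR addrA [eT n - _ + _]addrA subrK opprD opprB.
congr (_ - _); rewrite -{3}(scale1r (eT n)) -scalerBl.
by rewrite -[in n%:R](prednK (ltnW hn)) mulrSr addrK.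
Qed.
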